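(* Let $G$ be a finitely generated left-orderable group acting co-finitely, minimally and with general type on a simplicial tree $T$, such that some edge of $T$ has trivial stabilizer and all vertex stabilizers are finitely generated. Then $G$ is Hucha with respect to the family consisting of all cyclic subgroups of $G$ and all subgroups of $G$ acting elliptically on $T$.
   Context: Actions on trees are without edge inversions. Co-finite: finitely many orbits of vertices and edges. Minimal: $T$ is the only $G$-invariant subtree. General type: $G$ fixes no vertex and no end of $T$ and the orbit of a vertex meets at least three ends (ends being classes of rays with infinite intersection; $G$ fixes an end if some ray $p$ has $gp\cap p$ infinite for all $g$). A subgroup acts elliptically if it fixes a vertex. Hucha: a positive cone is a subsemigroup $P$ with $G=P\sqcup P^{-1}\sqcup\{1\}$. For a finite generating set $X$ with word metric $d_X$, an $r$-path is a sequence $g_0,\dots,g_n$ with $d_X(g_i,g_{i+1})\le r$; $S$ $r$-disconnects $H_1,H_2$ if every $r$-path from $H_1$ to $H_2$ meets $S$, and $r$-disconnects $P$ if it $r$-disconnects $\{u\},\{v\}$ for some $u,v\in P$. A negative swamp of width $r$ for a subgroup $H$ is $S\subseteq P^{-1}$ that $r$-disconnects $P$ and $r$-disconnects $g_1H,g_2H$ for some $g_1,g_2\in G$. $G$ is Hucha with respect to a family $\mathcal{H}$ if for some (equivalently any) finite generating set, for every positive cone $P$, every $H\in\mathcal{H}$ and every $r>0$ there is a negative swamp of width $r$ for $H$. *)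

From Stdlib Require Import List Arith.
Import ListNotations.

Set Implicit Arguments.
Unset Strict Implicit.

Record Group := Group_mk {
  gcar :> Type;
  gmul : gcar -> gcar -> gcar;
  gone : gcar;
  ginv : gcar -> gcar;
  gassoc : forall a b c, gmul a (gmul b c) = gmul (gmul a b) c;
  gmul1l : forall a, gmul gone a = a;
  gmul1r : forall a, gmul a gone = a;
  gmulVl : forall a, gmul (ginv a) a = gone;
  gmulVr : forall a, gmul a (ginv a) = gone
}.

Arguments gmul {g} _ _.
Arguments ginv {g} _.
Arguments gone g : clear implicits.

Section GroupDefs.
Variable G : Group.

Fixpoint word_eval (w : list (G * bool)) : G :=
  match w with
  | [] => gone G
  | (x, b) :: w' => gmul (if b then x else ginv x) (word_eval w')
  end.

Definition word_over (X : list G) (w : list (G * bool)) : Prop :=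
  forall a, In a w -> In (fst a) X.

Definition generating_set (X : list G) : Prop :=
  forall g : G, exists w, word_over X w /\ g = word_eval w.

Definition finitely_generated : Prop := exists X : list G, generating_set X.

Definition word_dist_le (X : list G) (g h : G) (r : nat) : Prop :=
  exists w, word_over X w /\ length w <= r /\ gmul (ginv g) h = word_eval w.

Definition subgroup (H : G -> Prop) : Prop :=
  H (gone G) /\ (forall a b, H a -> H b -> H (gmul a b)) /\
  (forall a, H a -> H (ginv a)).

Definition fg_subgroup (H : G -> Prop) : Prop :=
  subgroup H /\
  exists X : list G, (forall x, In x X -> H x) /\
    forall h, H h <-> exists w, word_over X w /\ h = word_eval w.

Fixpoint gpow (g : G) (n : nat) : G :=
  match n with 0 => gone G | S n' => gmul g (gpow g n') end.

Definition cyclic_subgroup (H : G -> Prop) : Prop :=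
  exists g : G, forall x, H x <-> exists n, x = gpow g n \/ x = gpow (ginv g) n.

Definition left_orderable : Prop :=
  exists lt : G -> G -> Prop,
    (forall a, ~ lt a a) /\
    (forall a b c, lt a b -> lt b c -> lt a c) /\
    (forall a b, a <> b -> lt a b \/ lt b a) /\
    (forall g a b, lt a b -> lt (gmul g a) (gmul g b)).

Definition positive_cone (P : G -> Prop) : Prop :=
  (forall a b, P a -> P b -> P (gmul a b)) /\
  (forall g, P g \/ P (ginv g) \/ g = gone G) /\
  (forall g, ~ (P g /\ P (ginv g))) /\
  (forall g, ~ (P g /\ g = gone G)) /\
  (forall g, ~ (P (ginv g) /\ g = gone G)).

Definition r_path (X : list G) (r : nat) (f : nat -> G) (n : nat) : Prop :=
  forall i, i < n -> word_dist_le X (f i) (f (S i)) r.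

Definition r_disconnects (X : list G) (r : nat) (S H1 H2 : G -> Prop) : Prop :=
  forall f n, r_path X r f n -> H1 (f 0) -> H2 (f n) ->
    exists i, i <= n /\ S (f i).

Definition r_disconnects_set (X : list G) (r : nat) (S A : G -> Prop) : Prop :=
  exists u v, A u /\ A v /\ r_disconnects X r S (fun x => x = u) (fun x => x = v).

Definition lcoset (g : G) (H : G -> Prop) : G -> Prop :=
  fun x => exists h, H h /\ x = gmul g h.

Definition negative_swamp (X : list G) (P : G -> Prop) (r : nat)
    (H S : G -> Prop) : Prop :=
  (forall s, S s -> P (ginv s)) /\
  r_disconnects_set X r S P /\
  exists g1 g2, r_disconnects X r S (lcoset g1 H) (lcoset g2 H).

(* Hucha with respect to a family of subgroups (stated for every finite
   generating set; the paper notes "some" and "any" are equivalent). *)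
Definition Hucha (fam : (G -> Prop) -> Prop) : Prop :=
  forall X : list G, generating_set X ->
  forall P, positive_cone P ->
  forall H, fam H ->
  forall r : nat, 0 < r ->
  exists S : G -> Prop, negative_swamp X P r H S.

End GroupDefs.

Section Trees.
Variable V : Type.
Variable adj : V -> V -> Prop.

Definition walk (p : nat -> V) (n : nat) : Prop :=
  forall i, i < n -> adj (p i) (p (S i)).

Definition graph_connected : Prop :=
  forall u v, exists p n, walk p n /\ p 0 = u /\ p n = v.

Definition no_cycle : Prop :=
  forall p n, 3 <= n -> walk p n -> p 0 = p n ->
    exists i j, i < j < n /\ p i = p j.

Definition simplicial_tree : Prop :=
  (forall u v, adj u v -> adj v u) /\
  (forall u, ~ adj u u) /\
  graph_connected /\ no_cycle.

Definition subtree (S : V -> Prop) : Prop :=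
  (exists v, S v) /\
  forall u v, S u -> S v ->
    exists p n, walk p n /\ p 0 = u /\ p n = v /\ forall i, i <= n -> S (p i).

Definition ray (p : nat -> V) : Prop :=
  (forall n, adj (p n) (p (S n))) /\ (forall n m, p n = p m -> n = m).

Definition infinite_inter (p q : nat -> V) : Prop :=
  forall N, exists n m, N <= n /\ p n = q m.

(* z lies on the geodesic from x to y (every walk from x to y meets z) *)
Definition between (x y z : V) : Prop :=
  forall p n, walk p n -> p 0 = x -> p n = y -> exists i, i <= n /\ p i = z.

End Trees.

Section Actions.
Variable G : Group.
Variable V : Type.
Variable adj : V -> V -> Prop.
Variable act : G -> V -> V.

Definition tree_action : Prop :=
  (forall v, act (gone G) v = v) /\
  (forall g h v, act (gmul g h) v = act g (act h v)) /\
  (forall g u v, adj u v -> adj (act g u) (act g v)) /\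
  (forall g u v, adj u v -> ~ (act g u = v /\ act g v = u)).

Definition cofinite_action : Prop :=
  (exists lv : list V, forall v, exists w g, In w lv /\ act g w = v) /\
  (exists le : list (V * V), forall u v, adj u v ->
     exists e g, In e le /\
       ((act g (fst e) = u /\ act g (snd e) = v) \/
        (act g (fst e) = v /\ act g (snd e) = u))).

Definition minimal_action : Prop :=
  forall S : V -> Prop, subtree adj S ->
    (forall g v, S v -> S (act g v)) -> forall v, S v.

Definition fixes_vertex : Prop := exists v, forall g, act g v = v.

Definition fixes_end : Prop :=
  exists p, ray adj p /\ forall g, infinite_inter (fun n => act g (p n)) p.

Definition orbit_meets_end (v : V) (p : nat -> V) : Prop :=
  forall N, exists g, between adj (p 0) (act g v) (p N).

Definition general_type : Prop :=
  ~ fixes_vertex /\ ~ fixes_end /\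
  exists v p1 p2 p3,
    ray adj p1 /\ ray adj p2 /\ ray adj p3 /\
    ~ infinite_inter p1 p2 /\ ~ infinite_inter p1 p3 /\ ~ infinite_inter p2 p3 /\
    orbit_meets_end v p1 /\ orbit_meets_end v p2 /\ orbit_meets_end v p3.

Definition vertex_stab (v : V) : G -> Prop := fun g => act g v = v.

Definition edge_stab (u v : V) : G -> Prop :=
  fun g => (act g u = u /\ act g v = v) \/ (act g u = v /\ act g v = u).

Definition acts_elliptically (H : G -> Prop) : Prop :=
  exists v, forall h, H h -> act h v = v.

End Actions.

(* Fix an edge [a b] with trivial stabilizer, let [T_a], [T_b] be the two half-trees it
   bounds, and split [G] into [halfG = {g | g a in T_a}] and its complement.  Since the
   translates of the edge have trivial stabilizers, an [r]-path in the Cayley graph can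
   only cross from [halfG] to its complement at finitely many elements.
   Minimality and the absence of a fixed end give [k] with [k T_a] inside [T_b] (and
   symmetrically [m]): otherwise a translate [z T_b] inside [T_b] would make the
   half-trees [z^-n T_a] shrink to an end fixed by [G].  Hence both sides of the wall are
   unbounded for the order of any positive cone [P], and after translating by an element
   above the finite crossing set the negative cone separates elements of [P] on the two
   sides.  The same translation separates a coset of [<h>] lying eventually in [halfG]
   from one lying eventually outside, and for a subgroup fixing a vertex a high power of
   [k m] pushes a whole coset out of [halfG]. *)

From Stdlib Require Import List Arith Wf_nat Lia Classical.
Import ListNotations.

Local Infix "**" := gmul (at level 40, left associativity).

Section GroupTheory.
Context {G : Group}.
Local Notation one := (gone G).
Implicit Types x y z g h : G.

Lemma mulgA x y z : x ** (y ** z) = x ** y ** z. Proof. apply gassoc. Qed.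
Lemma mul1g x : one ** x = x. Proof. apply gmul1l. Qed.
Lemma mulg1 x : x ** one = x. Proof. apply gmul1r. Qed.
Lemma mulVg x : ginv x ** x = one. Proof. apply gmulVl. Qed.
Lemma mulgV x : x ** ginv x = one. Proof. apply gmulVr. Qed.

Lemma mulKg x y : ginv x ** (x ** y) = y.
Proof. now rewrite mulgA, mulVg, mul1g. Qed.
Lemma mulKVg x y : x ** (ginv x ** y) = y.
Proof. now rewrite mulgA, mulgV, mul1g. Qed.
Lemma mulgK x y : y ** x ** ginv x = y.
Proof. now rewrite <- mulgA, mulgV, mulg1. Qed.
Lemma mulgKV x y : y ** ginv x ** x = y.
Proof. now rewrite <- mulgA, mulVg, mulg1. Qed.

Lemma mulgI g x y : g ** x = g ** y -> x = y.
Proof. intro E. now rewrite <- (mulKg g x), E, mulKg. Qed.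

Lemma mulg_eq1 x y : x ** y = one -> y = ginv x.
Proof. intro E. apply (mulgI x). now rewrite E, mulgV. Qed.

Lemma invgK x : ginv (ginv x) = x.
Proof. symmetry. apply mulg_eq1, mulVg. Qed.

Lemma invMg x y : ginv (x ** y) = ginv y ** ginv x.
Proof.
  symmetry. apply mulg_eq1.
  now rewrite mulgA, <- (mulgA x y), mulgV, mulg1, mulgV.
Qed.

Lemma invg1 : ginv one = one.
Proof. symmetry. apply mulg_eq1, mul1g. Qed.

Lemma gpowSr g n : gpow g (S n) = gpow g n ** g.
Proof.
  induction n as [|n IH]; simpl in *.
  - now rewrite mulg1, mul1g.
  - now rewrite IH at 1; rewrite mulgA.
Qed.

Lemma gpowD g n m : gpow g (n + m) = gpow g n ** gpow g m.
Proof.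
  induction n as [|n IH]; simpl.
  - now rewrite mul1g.
  - now rewrite IH, mulgA.
Qed.

Lemma gpowV g n : gpow (ginv g) n = ginv (gpow g n).
Proof.
  induction n as [|n IH].
  - simpl. now rewrite invg1.
  - rewrite (gpowSr g n). simpl. now rewrite IH, invMg.
Qed.

Lemma gpow1n n : gpow one n = one.
Proof. induction n as [|n IH]; simpl; [reflexivity | now rewrite IH, mul1g]. Qed.

Lemma r_path_mull (X : list G) r f n g :
  r_path X r f n -> r_path X r (fun i => g ** f i) n.
Proof.
  intros Hp i Hi. destruct (Hp i Hi) as (w & Hw & Hl & Ew).
  exists w. repeat split; auto. now rewrite invMg, <- mulgA, mulKg.
Qed.

Definition letter (l : G * bool) : G := if snd l then fst l else ginv (fst l).

Lemma word_eval_cons (l : G * bool) (w : list (G * bool)) :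
  word_eval (l :: w) = letter l ** word_eval w.
Proof. now destruct l. Qed.

Lemma finite_ball (X : list G) n : exists B : list G, forall u,
  word_over X u -> length u <= n -> In (word_eval u) B.
Proof.
  induction n as [|n [B HB]].
  - exists [one]. intros [|l u] Hu Hlen; [now left | simpl in Hlen; lia].
  - exists (B ++ flat_map (fun x => map (fun c => x ** c) B ++ map (fun c => ginv x ** c) B) X).
    intros [|l u] Hu Hlen; apply in_app_iff.
    + left. apply HB; auto. simpl. lia.
    + right. apply in_flat_map. exists (fst l). split; [apply Hu; now left|].
      rewrite word_eval_cons. apply in_app_iff.
      assert (Hin : In (word_eval u) B).
      { apply HB; [intros t Ht; apply Hu; now right | simpl in Hlen; lia]. }
      destruct l as [x [|]]; [left | right]; simpl; now apply in_map.
Qed.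

End GroupTheory.

(** * The order of a positive cone *)

Section ConeOrder.
Context {G : Group} (P : G -> Prop).
Hypothesis HP : positive_cone P.
Local Notation one := (gone G).
Implicit Types x y z g h : G.

Definition glt x y : Prop := P (ginv x ** y).
Definition gle x y : Prop := x = y \/ glt x y.

Lemma glt_irr x : ~ glt x x.
Proof. unfold glt. rewrite mulVg. destruct HP as (_ & _ & _ & H1 & _). firstorder. Qed.

Lemma glt_trans x y z : glt x y -> glt y z -> glt x z.
Proof.
  unfold glt. intros Hxy Hyz. destruct HP as [HPM _].
  pose proof (HPM _ _ Hxy Hyz) as H. now rewrite <- mulgA, mulKVg in H.
Qed.

Lemma glt_total x y : x <> y -> glt x y \/ glt y x.
Proof.
  intro Hne. destruct HP as (_ & Htot & _). unfold glt.
  destruct (Htot (ginv x ** y)) as [A|[A|A]].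
  - now left.
  - right. now rewrite invMg, invgK in A.
  - exfalso. apply Hne. now rewrite <- (mulKVg x y), A, mulg1.
Qed.

Lemma glt_mul2l g x y : glt (g ** x) (g ** y) <-> glt x y.
Proof. unfold glt. now rewrite invMg, <- mulgA, mulKg. Qed.

Lemma glt_one_l x : glt one x <-> P x.
Proof. unfold glt. now rewrite invg1, mul1g. Qed.

Lemma glt_mulr x q : P q -> glt x (x ** q).
Proof. unfold glt. now rewrite mulKg. Qed.

Lemma gle_mul2l g x y : gle x y -> gle (g ** x) (g ** y).
Proof. intros [->|H]; [now left | right; now apply glt_mul2l]. Qed.

Lemma gle_trans x y z : gle x y -> gle y z -> gle x z.
Proof.
  intros [<-|Hxy] [<-|Hyz]; unfold gle; eauto using glt_trans.
Qed.

Lemma gle_lt_trans x y z : gle x y -> glt y z -> glt x z.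
Proof. intros [<-|Hxy] Hyz; eauto using glt_trans. Qed.

Lemma glt_le_trans x y z : glt x y -> gle y z -> glt x z.
Proof. intros Hxy [<-|Hyz]; eauto using glt_trans. Qed.

Lemma gleNgt x y : ~ glt x y -> gle y x.
Proof.
  intro H. destruct (classic (x = y)) as [->|Hne]; [now left|].
  destruct (glt_total x y Hne); [contradiction | now right].
Qed.

Lemma gltNge x y : glt x y -> ~ gle y x.
Proof. intros Hxy Hyx. exact (glt_irr _ (glt_le_trans _ _ _ Hxy Hyx)). Qed.

Lemma exists_upper_bound (l : list G) : exists M, forall c, In c l -> gle c M.
Proof.
  induction l as [|c l [M HM]].
  - exists one. intros c [].
  - destruct (classic (glt M c)) as [H|H].
    + exists c. intros d [<-|Hd]; [now left | right; eauto using gle_lt_trans].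
    + exists M. intros d [<-|Hd]; auto using gleNgt.
Qed.

Lemma exists_strict_upper_bound (l : list G) : (exists q, P q) ->
  exists N, forall c, In c l -> glt c N.
Proof.
  intros [q Hq]. destruct (exists_upper_bound l) as [M HM].
  exists (M ** q). intros c Hc. apply (gle_lt_trans _ _ _ (HM c Hc)), glt_mulr, Hq.
Qed.

(* A bound [N] for [A] would bound [G = A \/ k^-1 A] by [N] and [k^-1 N], but [G] is
   unbounded. *)
Lemma unbounded_of_cover (A : G -> Prop) k q :
  (forall g, A g \/ A (k ** g)) -> P q -> forall N, exists g, A g /\ glt N g.
Proof.
  intros Hcov Hq N. apply NNPP. intro Hno.
  assert (Hle : forall g, A g -> gle g N).
  { intros g Hg. apply gleNgt. intro Hlt. apply Hno. eauto. }
  destruct (exists_upper_bound [N; ginv k ** N]) as [M HM].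
  assert (Hg : glt M (M ** q)) by now apply glt_mulr.
  destruct (Hcov (M ** q)) as [H|H].
  - apply (gltNge _ _ Hg), (gle_trans _ _ _ (Hle _ H)), HM. now left.
  - apply Hle, (gle_mul2l (ginv k)) in H. rewrite mulKg in H.
    apply (gltNge _ _ Hg), (gle_trans _ _ _ H), HM. right. now left.
Qed.

Lemma gpow_glt h : P h -> forall i j, i < j -> glt (gpow h i) (gpow h j).
Proof.
  intros Hh i j Hij.
  assert (Hstep : forall n, glt (gpow h n) (gpow h (S n))).
  { intro n. rewrite gpowSr. now apply glt_mulr. }
  induction Hij; eauto using glt_trans.
Qed.

Lemma gpow_inj h : P h -> forall i j, gpow h i = gpow h j -> i = j.
Proof.
  intros Hh i j E.
  destruct (Nat.lt_total i j) as [H|[H|H]]; auto; exfalso.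
  - pose proof (gpow_glt h Hh i j H) as L. rewrite E in L. exact (glt_irr _ L).
  - pose proof (gpow_glt h Hh j i H) as L. rewrite E in L. exact (glt_irr _ L).
Qed.

Lemma gle_gpow h n : P h -> gle one (gpow h n).
Proof.
  intro Hh. destruct n; [now left|]. right.
  change one with (gpow h 0). apply (gpow_glt h Hh). lia.
Qed.

Lemma gle_gpowV h n : P h -> gle (gpow (ginv h) n) one.
Proof.
  intro Hh. rewrite gpowV.
  destruct (gle_gpow h n Hh) as [E|E]; [left | right].
  - now rewrite <- E, invg1.
  - rewrite glt_one_l in E. unfold glt. now rewrite invgK, mulg1.
Qed.

Lemma P_inv_of_glt N z : glt (N ** z) N -> P (ginv z).
Proof. unfold glt. now rewrite invMg, <- mulgA, mulVg, mulg1. Qed.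

Lemma cyclic_coset_tail h c (Q : G -> Prop) N0 N : P h ->
  (forall n, N0 <= n -> Q (c ** gpow h n)) -> glt (c ** gpow h N0) N ->
  forall x, (exists n, x = gpow h n \/ x = gpow (ginv h) n) -> glt (c ** x) N \/ Q (c ** x).
Proof.
  intros Hh HQ HN x (n & [-> | ->]).
  - destruct (le_lt_dec N0 n) as [Hn|Hn]; [right; auto | left].
    apply (glt_trans _ _ _ (proj2 (glt_mul2l c _ _) (gpow_glt h Hh n N0 Hn)) HN).
  - left. refine (gle_lt_trans _ _ _ (gle_mul2l c _ _ _) HN).
    apply (gle_trans _ one); [apply gle_gpowV | apply gle_gpow]; auto.
Qed.

End ConeOrder.

(** * Half-trees *)

Lemma exists_switch (Q : nat -> Prop) n :
  Q 0 -> ~ Q n -> exists s, s < n /\ Q s /\ ~ Q (S s).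
Proof.
  induction n as [|n IH]; intros H0 Hn; [contradiction|].
  destruct (classic (Q n)) as [Hq|Hq].
  - exists n. auto.
  - destruct (IH H0 Hq) as (s & ? & ?). exists s. split; [lia | auto].
Qed.

Lemma injective_seq_avoids {T : Type} (s : nat -> T) : (forall i j, s i = s j -> i = j) ->
  forall l : list T, exists N0, forall n, N0 <= n -> ~ In (s n) l.
Proof.
  intros Hs l. induction l as [|c l [N0 HN]].
  - exists 0. intros n _ [].
  - destruct (classic (exists n0, s n0 = c)) as [[n0 En]|Hno].
    + exists (N0 + S n0). intros n Hn [E|E].
      * assert (n = n0) by (apply Hs; congruence). lia.
      * apply (HN n); auto. lia.
    + exists N0. intros n Hn [E|E]; [apply Hno; eauto | apply (HN n); auto].
Qed.

Section TreeActions.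
Context {V : Type} (adj : V -> V -> Prop).
Hypothesis adj_sym : forall u v, adj u v -> adj v u.
Hypothesis adj_irr : forall u, ~ adj u u.
Hypothesis adj_conn : graph_connected adj.
Hypothesis adj_nocycle : no_cycle adj.
Implicit Types (u w y : V) (p q : nat -> V).

Definition on_edge u w y y' : Prop := (y = u /\ y' = w) \/ (y = w /\ y' = u).

Definition avoids u w p n : Prop := forall i, i < n -> ~ on_edge u w (p i) (p (S i)).

Definition half u w y : Prop :=
  exists p n, walk adj p n /\ p 0 = w /\ p n = y /\ avoids u w p n.

Definition injective_upto p n : Prop :=
  forall i j, i <= n -> j <= n -> p i = p j -> i = j.

Definition catw p n q : nat -> V := fun i => if i <=? n then p i else q (i - n).

Definition revw p n : nat -> V := fun i => p (n - i).

Lemma catw_step p n q m i : p n = q 0 -> i < n + m ->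
  (i < n /\ catw p n q i = p i /\ catw p n q (S i) = p (S i)) \/
  (i - n < m /\ catw p n q i = q (i - n) /\ catw p n q (S i) = q (S (i - n))).
Proof.
  intros Hj Hi. unfold catw.
  destruct (Nat.leb_spec i n), (Nat.leb_spec (S i) n); try lia.
  - left. auto.
  - right. replace i with n by lia. rewrite Nat.sub_diag, Nat.sub_succ_l, Nat.sub_diag by lia.
    split; [lia | auto].
  - right. rewrite Nat.sub_succ_l by lia. split; [lia | auto].
Qed.

Lemma walk_catw p n q m :
  walk adj p n -> walk adj q m -> p n = q 0 -> walk adj (catw p n q) (n + m).
Proof.
  intros Hp Hq Hj i Hi.
  destruct (catw_step p n q m i Hj Hi) as [(? & -> & ->)|(? & -> & ->)]; auto.
Qed.

Lemma avoids_catw u w p n q m :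
  avoids u w p n -> avoids u w q m -> p n = q 0 -> avoids u w (catw p n q) (n + m).
Proof.
  intros Hp Hq Hj i Hi.
  destruct (catw_step p n q m i Hj Hi) as [(? & -> & ->)|(? & -> & ->)]; auto.
Qed.

Lemma catw_end p n q m : p n = q 0 -> catw p n q (n + m) = q m.
Proof.
  intro Hj. unfold catw. destruct (Nat.leb_spec (n + m) n).
  - replace m with 0 by lia. now rewrite Nat.add_0_r.
  - f_equal. lia.
Qed.

Lemma walk_revw p n : walk adj p n -> walk adj (revw p n) n.
Proof.
  intros Hp i Hi. unfold revw. apply adj_sym.
  replace (n - i) with (S (n - S i)) by lia. apply Hp. lia.
Qed.

Lemma avoids_revw u w p n : avoids u w p n -> avoids u w (revw p n) n.
Proof.
  intros Hp i Hi. unfold revw. replace (n - i) with (S (n - S i)) by lia.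
  intro He. apply (Hp (n - S i)); [lia|]. unfold on_edge in *. tauto.
Qed.

Definition steps_within p' n' p n : Prop :=
  forall k, k < n' -> exists k', k' < n /\ p' k = p k' /\ p' (S k) = p (S k').

Lemma walk_steps_within p' n' p n : steps_within p' n' p n -> walk adj p n -> walk adj p' n'.
Proof. intros Hs Hw k Hk. destruct (Hs k Hk) as (k' & ? & -> & ->). auto. Qed.

Lemma avoids_steps_within u w p' n' p n :
  steps_within p' n' p n -> avoids u w p n -> avoids u w p' n'.
Proof. intros Hs Hw k Hk. destruct (Hs k Hk) as (k' & ? & -> & ->). auto. Qed.

Lemma shortcut p n i j : i < j -> j <= n -> p i = p j ->
  exists p', steps_within p' (n - (j - i)) p n /\ p' 0 = p 0 /\ p' (n - (j - i)) = p n.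
Proof.
  intros Hij Hjn He.
  exists (fun k => if k <=? i then p k else p (k + (j - i))). split; [|split].
  - intros k Hk. destruct (Nat.leb_spec k i), (Nat.leb_spec (S k) i); try lia.
    + exists k. split; [lia | auto].
    + replace k with i by lia. exists j. split; [lia|]. split; auto. f_equal. lia.
    + exists (k + (j - i)). split; [lia | auto].
  - reflexivity.
  - destruct (Nat.leb_spec (n - (j - i)) i).
    + replace (n - (j - i)) with i by lia. now replace n with j by lia.
    + f_equal. lia.
Qed.

Lemma exists_injective_walk x y :
  exists p n, walk adj p n /\ p 0 = x /\ p n = y /\ injective_upto p n.
Proof.
  assert (Hex : exists k, exists p, walk adj p k /\ p 0 = x /\ p k = y).
  { destruct (adj_conn x y) as (p & n & ?). eauto. }
  destruct (dec_inh_nat_subset_has_unique_least_element _ (fun k => classic _) Hex)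
    as (k & ((p & Hp & P0 & Pk) & Hmin) & _).
  exists p, k. repeat split; auto.
  assert (Hshort : forall i j, i < j <= k -> p i <> p j).
  { intros i j Hij He. destruct (shortcut p k i j) as (p' & Hs & E0 & En); try lia; auto.
    enough (k <= k - (j - i)) by lia.
    apply Hmin. exists p'. repeat split; try congruence. eapply walk_steps_within; eauto. }
  intros i j Hi Hj He. destruct (Nat.lt_total i j) as [H|[H|H]]; auto.
  - exfalso. apply (Hshort i j); auto.
  - exfalso. apply (Hshort j i); auto.
Qed.

Lemma half_refl u w : half u w w.
Proof. exists (fun _ => w), 0. repeat split; auto; intros i Hi; lia. Qed.

Lemma half_prefix u w p n m :
  walk adj p n -> p 0 = w -> avoids u w p n -> m <= n -> half u w (p m).
Proof.
  intros Hw H0 Ha Hm. exists p, m. repeat split; auto; intros i Hi; [apply Hw | apply Ha]; lia.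
Qed.

Lemma half_step u w y y' : half u w y -> adj y y' -> ~ on_edge u w y y' -> half u w y'.
Proof.
  intros (p & n & Hw & H0 & Hn & Ha) Hadj Hne.
  exists (catw p n (fun i => if i =? 0 then y else y')), (n + 1).
  repeat split.
  - apply walk_catw; auto. intros i Hi. replace i with 0 by lia. auto.
  - exact H0.
  - now rewrite catw_end.
  - apply avoids_catw; auto. intros i Hi. replace i with 0 by lia. auto.
Qed.

Lemma half_enter u w y y' : adj y y' -> ~ half u w y -> half u w y' -> y = u /\ y' = w.
Proof.
  intros Hadj Hn Hy.
  destruct (classic (on_edge u w y' y)) as [[[-> ->]|[-> ->]]|Hne]; auto;
    exfalso; apply Hn; eauto using half_refl, half_step.
Qed.

Lemma half_exit u w y y' : adj y y' -> half u w y -> ~ half u w y' -> y = w /\ y' = u.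
Proof. intros Hadj Hy Hn. destruct (half_enter u w y' y (adj_sym _ _ Hadj) Hn Hy). auto. Qed.

Lemma walk_exit_half u w p n : walk adj p n -> half u w (p 0) -> ~ half u w (p n) ->
  exists s, s < n /\ p s = w /\ p (S s) = u.
Proof.
  intros Hw H0 Hn. destruct (exists_switch (fun i => half u w (p i)) n H0 Hn) as (s & Hs & A & B).
  exists s. split; auto. apply half_exit; auto.
Qed.

Lemma walk_enter_half u w p n : walk adj p n -> ~ half u w (p 0) -> half u w (p n) ->
  exists s, s < n /\ p s = u /\ p (S s) = w.
Proof.
  intros Hw H0 Hn.
  destruct (exists_switch (fun i => ~ half u w (p i)) n H0 (fun H => H Hn)) as (s & Hs & A & B).
  exists s. split; auto. apply half_enter; auto. now apply NNPP.
Qed.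

Lemma half_cover u w y : adj u w -> half u w y \/ half w u y.
Proof.
  intro Huw. destruct (adj_conn w y) as (p & n & Hw & H0 & <-).
  enough (forall i, i <= n -> half u w (p i) \/ half w u (p i)) by auto.
  induction i as [|i IH]; intro Hi.
  - left. rewrite H0. apply half_refl.
  - assert (Hst : adj (p i) (p (S i))) by (apply Hw; lia).
    destruct (classic (on_edge u w (p i) (p (S i)))) as [[[_ ->]|[_ ->]]|Hne].
    + left. apply half_refl.
    + right. apply half_refl.
    + destruct (IH ltac:(lia)); [left | right]; eapply half_step; eauto.
      unfold on_edge in *. tauto.
Qed.

(* A shortest such walk closes up, with the edge, to a cycle without repetitions. *)
Lemma no_walk_around_edge u w : adj u w ->
  ~ exists k r, walk adj r k /\ r 0 = w /\ r k = u /\ avoids u w r k.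
Proof.
  intros Huw Hex.
  destruct (dec_inh_nat_subset_has_unique_least_element _ (fun k => classic _) Hex)
    as (k & ((r & Hr & R0 & Rk & Ra) & Hmin) & _).
  destruct k as [|[|k]].
  - apply (adj_irr u). congruence.
  - apply (Ra 0); [lia|]. right. split; congruence.
  - set (c := fun i => if i <=? S (S k) then r i else w).
    assert (Hc : walk adj c (S (S (S k)))).
    { intros i Hi. unfold c.
      destruct (Nat.leb_spec i (S (S k))), (Nat.leb_spec (S i) (S (S k))); try lia.
      - apply Hr. lia.
      - replace i with (S (S k)) by lia. rewrite Rk. auto. }
    assert (Hcl : c 0 = c (S (S (S k)))).
    { unfold c. destruct (Nat.leb_spec (S (S (S k))) (S (S k))); [lia|]. simpl. congruence. }
    destruct (adj_nocycle c (S (S (S k))) ltac:(lia) Hc Hcl) as (i & j & (Hij & Hj) & Heq).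
    unfold c in Heq.
    destruct (Nat.leb_spec i (S (S k))), (Nat.leb_spec j (S (S k))); try lia.
    destruct (shortcut r (S (S k)) i j Hij ltac:(lia) Heq) as (r' & Hs & E0 & En).
    enough (S (S k) <= S (S k) - (j - i)) by lia.
    apply Hmin. exists r'. repeat split; try congruence.
    + eapply walk_steps_within; eauto.
    + eapply avoids_steps_within; eauto.
Qed.

Lemma half_disjoint u w y : adj u w -> ~ (half u w y /\ half w u y).
Proof.
  intros Huw [(p & n & Hw & H0 & Hn & Ha) (q & m & Hw' & H0' & Hm & Ha')].
  apply (no_walk_around_edge u w Huw).
  exists (n + m), (catw p n (revw q m)).
  assert (Hj : p n = revw q m 0) by (unfold revw; rewrite Nat.sub_0_r; congruence).
  repeat split.
  - apply walk_catw; auto using walk_revw.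
  - exact H0.
  - rewrite catw_end by exact Hj. unfold revw. now rewrite Nat.sub_diag.
  - apply avoids_catw; auto. apply avoids_revw.
    intros i Hi He. apply (Ha' i Hi). unfold on_edge in *. tauto.
Qed.

Lemma half_compl u w y : adj u w -> ~ half u w y -> half w u y.
Proof. intros H Hn. destruct (half_cover u w y H); tauto. Qed.

Lemma half_convex u w p n : walk adj p n -> injective_upto p n ->
  half u w (p 0) -> half u w (p n) -> forall i, i <= n -> half u w (p i).
Proof.
  intros Hw Hinj H0 Hn i Hi. apply NNPP. intro Hni.
  destruct (walk_exit_half u w p i) as (s & Hs & Ps & Ps'); auto.
  { intros k Hk. apply Hw. lia. }
  destruct (walk_enter_half u w (fun k => p (k + i)) (n - i)) as (s' & Hs' & Qs & Qs'); simpl.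
  - intros k Hk. apply Hw. lia.
  - exact Hni.
  - now replace (n - i + i) with n by lia.
  - simpl in Qs'. enough (s = S (s' + i)) by lia. apply Hinj; [lia | lia | congruence].
Qed.

Lemma half_sub u1 w1 x x' : half u1 w1 x' -> ~ half x x' u1 ->
  forall y, half x x' y -> half u1 w1 y.
Proof.
  intros Hx' Hu1 y (p & n & Hw & P0 & <- & Pa). apply NNPP. intro Hny.
  destruct (walk_exit_half u1 w1 p n Hw) as (s & Hs & Ps & Ps'); [congruence | auto |].
  apply Hu1. rewrite <- Ps'. apply (half_prefix x x' p n); auto; lia.
Qed.

Lemma half_nested u1 w1 u2 w2 : adj u2 w2 -> half u1 w1 u2 -> half u1 w1 w2 ->
  (forall y, half u2 w2 y -> half u1 w1 y) \/ (forall y, half w2 u2 y -> half u1 w1 y).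
Proof.
  intros H2 Hu2 Hw2.
  destruct (half_cover u2 w2 u1 H2) as [Hu1|Hu1]; [right | left]; apply half_sub; auto;
    intro Hu1'; apply (half_disjoint u2 w2 u1 H2); tauto.
Qed.

Lemma half_pair_cases u1 w1 u2 w2 : adj u1 w1 -> adj u2 w2 ->
  (forall y, ~ (half u1 w1 y /\ half u2 w2 y)) \/
  (forall y, half u1 w1 y -> half u2 w2 y) \/
  (forall y, half u2 w2 y -> half u1 w1 y) \/
  (forall y, half u1 w1 y \/ half u2 w2 y).
Proof.
  intros H1 H2.
  assert (Hdisj : forall y, half u1 w1 y -> half w1 u1 y -> False)
    by (intros y A B; exact (half_disjoint u1 w1 y H1 (conj A B))).
  destruct (classic (half u1 w1 u2)) as [A|A], (classic (half u1 w1 w2)) as [B|B].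
  - destruct (half_nested u1 w1 u2 w2 H2 A B) as [N|N]; [do 2 right; now left|].
    do 3 right. intro y. destruct (half_cover u2 w2 y H2); auto.
  - destruct (half_exit u1 w1 u2 w2 H2 A B) as [-> ->]. left. intros y [Y1 Y2]. eauto.
  - destruct (half_enter u1 w1 u2 w2 H2 A B) as [-> ->]. right. now left.
  - apply half_compl in A; auto. apply half_compl in B; auto.
    destruct (half_nested w1 u1 u2 w2 H2 A B) as [N|N].
    + left. intros y [Y1 Y2]. eauto.
    + right. left. intros y Y1. apply NNPP. intro Hn. eauto using half_compl.
Qed.

(** * Half-trees under the action *)

Context {G : Group} (act : G -> V -> V).
Hypothesis act1 : forall v, act (gone G) v = v.
Hypothesis actM : forall g h v, act (g ** h) v = act g (act h v).
Hypothesis act_adj : forall g u v, adj u v -> adj (act g u) (act g v).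
Local Notation one := (gone G).
Implicit Types (g h x z : G).

Lemma actK g y : act (ginv g) (act g y) = y.
Proof. now rewrite <- actM, mulVg, act1. Qed.

Lemma actKV g y : act g (act (ginv g) y) = y.
Proof. now rewrite <- actM, mulgV, act1. Qed.

Lemma act_inj g y y' : act g y = act g y' -> y = y'.
Proof. intro E. now rewrite <- (actK g y), E, actK. Qed.

Lemma walk_act g p n : walk adj p n -> walk adj (fun i => act g (p i)) n.
Proof. intros H i Hi. apply act_adj, H, Hi. Qed.

Lemma injective_upto_act g p n : injective_upto p n -> injective_upto (fun i => act g (p i)) n.
Proof. intros H i j Hi Hj E. apply act_inj in E. auto. Qed.

Lemma half_act g u w y : half u w y -> half (act g u) (act g w) (act g y).
Proof.
  intros (p & n & Hw & H0 & Hn & Ha). exists (fun i => act g (p i)), n.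
  repeat split; try congruence.
  - now apply walk_act.
  - intros i Hi He. apply (Ha i Hi).
    destruct He as [[E1 E2]|[E1 E2]]; apply act_inj in E1, E2; [left | right]; auto.
Qed.

Lemma half_act_iff g u w y : half u w (act g y) <-> half (act (ginv g) u) (act (ginv g) w) y.
Proof.
  split; intro H.
  - apply (half_act (ginv g)) in H. now rewrite actK in H.
  - apply (half_act g) in H. now rewrite !actKV in H.
Qed.

Section FreeEdge.
Variables a b : V.
Hypothesis Hab : adj a b.
Hypothesis Hstab : forall g, edge_stab act a b g -> g = one.
Local Notation Ta := (half b a).
Local Notation Tb := (half a b).

Lemma Tb_iff y : Tb y <-> ~ Ta y.
Proof.
  split.
  - intros Hb Ha. exact (half_disjoint a b y Hab (conj Hb Ha)).
  - apply half_compl, adj_sym, Hab.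
Qed.

Lemma edge_flip_trivial g : ~ Ta (act g a) -> Ta (act g b) -> g = one.
Proof.
  intros Ha Hb. apply Hstab. right.
  now destruct (half_enter b a (act g a) (act g b) (act_adj g _ _ Hab) Ha Hb).
Qed.

Definition preTa h y : Prop := Ta (act h y).

Lemma preTa_half h y : preTa h y <-> half (act (ginv h) b) (act (ginv h) a) y.
Proof. apply half_act_iff. Qed.

Lemma preTa_cancel h y : preTa h (act (ginv h) y) <-> Ta y.
Proof. unfold preTa. now rewrite actKV. Qed.

Lemma preTa_cases h1 h2 :
  (forall y, ~ (preTa h1 y /\ preTa h2 y)) \/
  (forall y, preTa h1 y -> preTa h2 y) \/
  (forall y, preTa h2 y -> preTa h1 y) \/
  (forall y, preTa h1 y \/ preTa h2 y).
Proof.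
  setoid_rewrite preTa_half. apply half_pair_cases; apply act_adj, adj_sym, Hab.
Qed.

Lemma walk_enter_preTa h p n : walk adj p n -> ~ preTa h (p 0) -> preTa h (p n) ->
  exists s, s < n /\ p (S s) = act (ginv h) a.
Proof.
  rewrite !preTa_half. intros Hw H0 Hn.
  destruct (walk_enter_half _ _ p n Hw H0 Hn) as (s & Hs & _ & E). eauto.
Qed.

(** * Elements pushing [T_b] into itself *)

Section Chain.
Variable x : G.
Hypothesis x_Tb : forall y, ~ Ta y -> ~ Ta (act x y).
Hypothesis x_a : ~ Ta (act x a).
Local Notation Y n := (preTa (gpow x n)).

Lemma Y_S n y : Y (S n) y -> Y n y.
Proof.
  unfold preTa. simpl. rewrite actM. intro H. apply NNPP. intro H'. exact (x_Tb _ H' H).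
Qed.

Lemma Y_le n m y : n <= m -> Y m y -> Y n y.
Proof. induction 1; auto using Y_S. Qed.

Lemma Y_shift n m y : Y n (act (gpow x m) y) <-> Y (n + m) y.
Proof. unfold preTa. now rewrite gpowD, actM. Qed.

Lemma Y1 y : Y 1 y <-> Ta (act x y).
Proof. unfold preTa. simpl. now rewrite mulg1. Qed.

Lemma Y_a n : 1 <= n -> ~ Y n a.
Proof. intros Hn H. apply (Y_le 1 n a Hn), Y1 in H. auto. Qed.

Lemma Y1_enter y y' : adj y y' -> ~ Y 1 y -> Y 1 y' -> y' = act (ginv x) a.
Proof.
  rewrite !Y1. intros Hy H1 H2.
  destruct (half_enter b a _ _ (act_adj x _ _ Hy) H1 H2) as [_ E].
  now rewrite <- E, actK.
Qed.

(* Entering each further level of the chain costs at least one step. *)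
Lemma Y_depth K : forall l p, walk adj p l -> ~ Y 1 (p 0) -> Y K (p l) -> K <= l.
Proof.
  induction K as [|K IH]; intros l p Hw H0 HK; [lia|].
  assert (HY1 : Y 1 (p l)) by (apply (Y_le 1 (S K)); auto; lia).
  destruct (exists_switch (fun i => ~ Y 1 (p i)) l H0 (fun H => H HY1)) as (s & Hs & A & B).
  apply NNPP in B.
  assert (E : p (S s) = act (ginv x) a) by (apply (Y1_enter (p s)); auto).
  enough (K <= l - S s) by lia.
  apply (IH (l - S s) (fun i => act x (p (S s + i)))).
  - intros i Hi. apply act_adj. rewrite <- plus_n_Sm. apply Hw. lia.
  - rewrite Nat.add_0_r, E, actKV. apply Y_a. lia.
  - replace (S s + (l - S s)) with l by lia.
    pose proof (proj2 (Y_shift K 1 (p l))) as H. rewrite Nat.add_1_r in H.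
    specialize (H HK). simpl in H. now rewrite mulg1 in H.
Qed.

Lemma Y_eventually_out w : exists K, forall K', K <= K' -> ~ Y K' w.
Proof.
  destruct (adj_conn a w) as (p & l & Hw & H0 & Hl).
  exists (S l). intros K' HK' HY.
  enough (S l <= l) by lia.
  apply (Y_depth (S l) l p Hw).
  - rewrite H0. apply Y_a. lia.
  - rewrite Hl. now apply (Y_le _ K').
Qed.

Section ChainRay.
Variables (q : nat -> V) (L : nat).
Hypothesis q_walk : walk adj q L.
Hypothesis q0 : q 0 = a.
Hypothesis qL : q L = act (ginv x) a.
Hypothesis q_inj : injective_upto q L.

Lemma chain_period_pos : 0 < L.
Proof.
  apply Nat.neq_0_lt_0. intro HL0. apply x_a.
  assert (Ea : act (ginv x) a = a) by (rewrite <- qL, HL0; exact q0).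
  assert (Exa : act x a = a) by (rewrite <- Ea at 1; apply actKV).
  rewrite Exa. apply half_refl.
Qed.

Lemma q_Ta i : i <= L -> Ta (q i).
Proof.
  apply (half_convex b a q L q_walk q_inj).
  - rewrite q0. apply half_refl.
  - rewrite qL. apply NNPP. intro H. apply (x_Tb _ H). rewrite actKV. apply half_refl.
Qed.

Lemma q_shift_out i : i < L -> ~ Ta (act x (q i)).
Proof.
  intros Hi Hy.
  destruct (exists_switch (fun j => ~ Ta (act x (q j))) i) as (s & Hs & A & B).
  - now rewrite q0.
  - auto.
  - apply NNPP in B.
    destruct (half_enter b a _ _ (act_adj x _ _ (q_walk s ltac:(lia))) A B) as [_ E].
    assert (S s = L) by (apply q_inj; [lia | lia | now rewrite qL, <- E, actK]).
    lia.
Qed.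

Definition chain_ray m : V := act (ginv (gpow x (m / L))) (q (m mod L)).

Lemma chain_ray_block k i : i < L -> chain_ray (k * L + i) = act (ginv (gpow x k)) (q i).
Proof.
  intro Hi. unfold chain_ray.
  now rewrite <- (Nat.div_unique (k * L + i) L k i Hi), <- (Nat.mod_unique (k * L + i) L k i Hi)
    by lia.
Qed.

Lemma chain_ray_decomp m : exists k i, i < L /\ m = k * L + i.
Proof.
  pose proof chain_period_pos.
  exists (m / L), (m mod L). split.
  - apply Nat.mod_upper_bound. lia.
  - rewrite (Nat.div_mod m L) at 1; lia.
Qed.

Lemma chain_ray_period j : chain_ray (j * L) = act (ginv (gpow x j)) a.
Proof.
  rewrite <- (Nat.add_0_r (j * L)), chain_ray_block, q0; auto using chain_period_pos.
Qed.

Lemma chain_ray0 : chain_ray 0 = a.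
Proof.
  unfold chain_ray. rewrite Nat.Div0.div_0_l, Nat.Div0.mod_0_l. simpl.
  now rewrite invg1, act1.
Qed.

Lemma chain_ray_level k i : i < L ->
  Y k (chain_ray (k * L + i)) /\ ~ Y (S k) (chain_ray (k * L + i)).
Proof.
  intro Hi. rewrite chain_ray_block by exact Hi. split.
  - apply preTa_cancel, q_Ta. lia.
  - unfold preTa. simpl. rewrite actM, actKV. now apply q_shift_out.
Qed.

Lemma chain_ray_is_ray : ray adj chain_ray.
Proof.
  split.
  - intro m. destruct (chain_ray_decomp m) as (k & i & Hi & ->).
    destruct (Nat.eq_dec (S i) L) as [Heq|Hne].
    + replace (S (k * L + i)) with (S k * L) by (simpl; lia).
      rewrite chain_ray_period, chain_ray_block by exact Hi. simpl.
      rewrite invMg, actM, <- qL, <- Heq. apply act_adj, q_walk. lia.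
    + rewrite <- Nat.add_succ_r, !chain_ray_block by lia. apply act_adj, q_walk. lia.
  - intros m m' E.
    destruct (chain_ray_decomp m) as (k & i & Hi & ->).
    destruct (chain_ray_decomp m') as (k' & i' & Hi' & ->).
    destruct (chain_ray_level k i Hi) as [Hk HSk].
    destruct (chain_ray_level k' i' Hi') as [Hk' HSk'].
    rewrite E in Hk, HSk.
    assert (k = k') as <-.
    { destruct (Nat.lt_total k k') as [H|[H|H]]; auto; exfalso.
      - exact (HSk (Y_le (S k) k' _ H Hk')).
      - exact (HSk' (Y_le (S k') k _ H Hk)). }
    rewrite !chain_ray_block in E by assumption. apply act_inj in E.
    enough (i = i') by now subst. apply q_inj; auto; lia.
Qed.

End ChainRay.

(* [h a] is within [d(v, a)] of [h v = v], and the depth in the chain grows by at most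
   one per step. *)
Lemma Y_stab_out v : exists M, forall h, act h v = v -> ~ Y M (act h a).
Proof.
  destruct (Y_eventually_out v) as [J HJ].
  destruct (adj_conn v a) as (W & d & Hw & W0 & Wd).
  exists (d + 1 + J). intros h Hh HY.
  enough (d + 1 <= d) by lia.
  apply (Y_depth (d + 1) d (fun i => act (gpow x J) (act h (W i)))).
  - intros i Hi. apply act_adj, act_adj, Hw, Hi.
  - rewrite W0, Hh, (Y_shift 1 J v). apply HJ. lia.
  - rewrite Wd. now apply (Y_shift (d + 1) J).
Qed.

Hypothesis overlap : forall k, exists y, Ta y /\ Ta (act k y).

(* For [j], then [i], large, [overlap] leaves only the case [x^-i T_a] inside
   [g x^-j T_a]; the ray then enters [g x^-j T_a] through its base point [g x^-j a],
   the image of the ray point [x^-j a]. *)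
Lemma chain_ray_translate q L : walk adj q L -> q 0 = a -> q L = act (ginv x) a ->
  injective_upto q L ->
  forall g, infinite_inter (fun n => act g (chain_ray q L n)) (chain_ray q L).
Proof.
  intros Hq q0 qL qinj g N.
  destruct (Y_eventually_out (act (ginv g) a)) as [K HK].
  set (j := K + N).
  set (h := gpow x j ** ginv g).
  assert (Ha : ~ preTa h a) by (unfold preTa, h; rewrite actM; apply HK; lia).
  assert (Hinvh : ginv h = g ** ginv (gpow x j)) by (unfold h; now rewrite invMg, invgK).
  set (u := act g (act (ginv (gpow x j)) a)).
  assert (Hu : preTa h u) by (unfold u; rewrite <- actM, <- Hinvh; apply preTa_cancel, half_refl).
  destruct (Y_eventually_out u) as [K' HK'].
  set (i := S K').
  destruct (preTa_cases (gpow x i) h) as [C|[C|[C|C]]].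
  - exfalso. destruct (overlap (gpow x i ** ginv h)) as (y & Hy & Hky).
    apply (C (act (ginv h) y)). split.
    + unfold preTa. now rewrite <- actM.
    + now apply preTa_cancel.
  - pose proof (chain_period_pos q L q0 qL) as HL.
    assert (Hw : walk adj (chain_ray q L) (i * L)) by (intros n _; apply chain_ray_is_ray; auto).
    destruct (walk_enter_preTa h (chain_ray q L) (i * L) Hw) as (s & _ & Es).
    + rewrite chain_ray0; auto.
    + apply C. rewrite chain_ray_period by auto. apply preTa_cancel, half_refl.
    + exists (j * L), (S s). split; [unfold j; nia|].
      rewrite Es, Hinvh, actM, chain_ray_period; auto.
  - exfalso. apply (HK' i); [unfold i; lia|]. now apply C.
  - exfalso. destruct (C a) as [Ca|Ca]; [|exact (Ha Ca)].
    apply (Y_a i); [unfold i; lia | exact Ca].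
Qed.

Lemma chain_fixes_end : fixes_end adj act.
Proof.
  destruct (exists_injective_walk a (act (ginv x) a)) as (q & L & Hq & q0 & qL & qinj).
  exists (chain_ray q L). split.
  - now apply chain_ray_is_ray.
  - now apply chain_ray_translate.
Qed.

End Chain.

(* Otherwise the vertices whose orbit stays in [T_a] form an invariant subtree
   containing [a] but not [b]. *)
Lemma exists_edge_translate_in_Tb :
  minimal_action adj act -> exists z, Tb (act z a) /\ Tb (act z b).
Proof.
  intro Hminimal. apply NNPP. intro HN.
  set (C := fun y => forall z, Ta (act z y)).
  assert (Ca : C a).
  { intro z. apply NNPP. intro Hza. destruct (classic (Ta (act z b))) as [Hzb|Hzb].
    - apply Hza. rewrite (edge_flip_trivial z Hza Hzb), act1. apply half_refl.
    - apply HN. exists z. now rewrite !Tb_iff. }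
  assert (HC : subtree adj C).
  { split; [now exists a|]. intros u v Cu Cv.
    destruct (exists_injective_walk u v) as (p & n & Hw & P0 & Pn & Hinj).
    exists p, n. repeat split; auto. intros i Hi z.
    apply (half_convex b a (fun k => act z (p k)) n);
      auto using walk_act, injective_upto_act.
    - rewrite P0. apply Cu.
    - rewrite Pn. apply Cv. }
  assert (Cb : C b) by (apply Hminimal; auto; intros g v Cv z; rewrite <- actM; apply Cv).
  specialize (Cb one). rewrite act1 in Cb. exact (proj1 (Tb_iff b) (half_refl a b) Cb).
Qed.

(* If every [k T_a] met [T_a], a translate [z T_b] of [T_b] inside [T_b]
   would make [z^-n T_a] shrink to an end fixed by [G]. *)
Lemma exists_Ta_into_Tb : minimal_action adj act -> ~ fixes_end adj act ->
  exists k, forall y, Ta y -> Tb (act k y).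
Proof.
  intros Hminimal Hnfe. apply NNPP. intro Hno.
  assert (overlap : forall k, exists y, Ta y /\ Ta (act k y)).
  { intro k. apply NNPP. intro Hk. apply Hno. exists k. intros y Hy.
    apply Tb_iff. intro Hky. apply Hk. eauto. }
  destruct (exists_edge_translate_in_Tb Hminimal) as (z & Hza & Hzb).
  destruct (half_nested a b (act z a) (act z b) (act_adj z _ _ Hab) Hza Hzb) as [N|N].
  - apply Hnfe, (chain_fixes_end z); auto.
    + intros y Hy. rewrite <- !Tb_iff in *. apply N, half_act, Hy.
    + now apply Tb_iff.
  - destruct (overlap z) as (y & Hy & Hzy).
    exact (proj1 (Tb_iff _) (N _ (half_act z _ _ _ Hy)) Hzy).
Qed.

(** * The wall in the Cayley graph *)

Lemma edge_translate_unique g g' y y' :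
  on_edge a b (act g y) (act g y') -> on_edge a b (act g' y) (act g' y') -> g = g'.
Proof.
  intros H H'.
  assert (Hk : forall t, act (g ** ginv g') (act g' t) = act g t)
    by (intro t; now rewrite actM, actK).
  assert (E : g ** ginv g' = one).
  { apply Hstab. pose proof (Hk y). pose proof (Hk y').
    destruct H as [[A B]|[A B]], H' as [[A' B']|[A' B']];
      [left | right | right | left]; split; congruence. }
  now rewrite <- (mulgKV g' g), E, mul1g.
Qed.

Lemma finite_edge_translates W l : exists C : list G, forall g i, i < l ->
  on_edge a b (act g (W i)) (act g (W (S i))) -> In g C.
Proof.
  induction l as [|l [C HC]].
  - exists nil. intros g i Hi. lia.
  - destruct (classic (exists g0, on_edge a b (act g0 (W l)) (act g0 (W (S l)))))
      as [[g0 Hg0]|Hno]; [exists (g0 :: C) | exists C];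
      intros g i Hi He; destruct (Nat.eq_dec i l) as [->|Hne].
    + left. eapply edge_translate_unique; eauto.
    + right. apply (HC g i); auto. lia.
    + exfalso. eauto.
    + apply (HC g i); auto. lia.
Qed.

Definition separated y y' : Prop := ~ (Ta y <-> Ta y').

Lemma walk_crosses_edge p n : walk adj p n -> separated (p 0) (p n) ->
  exists i, i < n /\ on_edge a b (p i) (p (S i)).
Proof.
  intros Hw Hsep. unfold separated in Hsep. destruct (classic (Ta (p 0))) as [H0|H0].
  - destruct (walk_exit_half b a p n Hw H0) as (s & Hs & E1 & E2); [tauto|].
    exists s. split; [exact Hs | now left].
  - destruct (walk_enter_half b a p n Hw H0) as (s & Hs & E1 & E2); [tauto|].
    exists s. split; [exact Hs | now right].
Qed.

(* The translate by [g] of a walk from [a] to [t a] then passes through the edge. *)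
Lemma finite_step_crossers t : exists C : list G, forall g,
  separated (act g a) (act (g ** t) a) -> In g C.
Proof.
  destruct (adj_conn a (act t a)) as (W & l & Hw & W0 & Wl).
  destruct (finite_edge_translates W l) as [C HC].
  exists C. intros g Hsep.
  destruct (walk_crosses_edge (fun i => act g (W i)) l (walk_act g W l Hw)) as (i & Hi & He).
  - now rewrite W0, Wl, <- actM.
  - eapply HC; eauto.
Qed.

Definition halfG g : Prop := Ta (act g a).

Lemma finite_letter_crossers (X : list G) : exists K : list G, forall l g,
  In (fst l) X -> separated (act g a) (act (g ** letter l) a) -> In g K.
Proof.
  induction X as [|x X [K HK]].
  - exists nil. intros l g [].
  - destruct (finite_step_crossers x) as [C1 H1].
    destruct (finite_step_crossers (ginv x)) as [C2 H2].
    exists (C1 ++ C2 ++ K). intros [y bit] g Hy Hsep. simpl in Hy. rewrite !in_app_iff.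
    destruct Hy as [<-|Hy].
    + destruct bit; simpl in Hsep; auto.
    + do 2 right. now apply (HK (y, bit)).
Qed.

Lemma word_crossing (X K : list G) :
  (forall l g, In (fst l) X -> separated (act g a) (act (g ** letter l) a) -> In g K) ->
  forall (w : list (G * bool)) g, word_over X w ->
  separated (act g a) (act (g ** word_eval w) a) ->
  exists c (u : list (G * bool)),
    In c K /\ word_over X u /\ length u <= length w /\ g = c ** ginv (word_eval u).
Proof.
  intro HK. induction w as [|l w IH]; intros g Hw Hsep.
  - exfalso. apply Hsep. simpl. now rewrite mulg1.
  - assert (Hl : In (fst l) X) by (apply Hw; now left).
    assert (Hw' : word_over X w) by (intros t Ht; apply Hw; now right).
    rewrite word_eval_cons in Hsep.
    destruct (classic (separated (act g a) (act (g ** letter l) a))) as [H1|H1].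
    + exists g, nil. split; [exact (HK l g Hl H1)|]. split; [intros t []|].
      split; simpl; [lia | now rewrite invg1, mulg1].
    + destruct (IH (g ** letter l) Hw') as (c & u & Hc & Hu & Hlen & Eg).
      { rewrite <- mulgA. unfold separated in *. tauto. }
      exists c, (l :: u). repeat split; auto.
      * intros t [<-|Ht]; auto.
      * simpl. lia.
      * now rewrite word_eval_cons, invMg, mulgA, <- Eg, mulgK.
Qed.

Lemma finite_wall_crossing (X : list G) r : exists C : list G, forall f n,
  r_path X r f n -> halfG (f 0) -> ~ halfG (f n) -> exists i, i <= n /\ In (f i) C.
Proof.
  destruct (finite_letter_crossers X) as [K HK].
  destruct (finite_ball X r) as [B HB].
  exists (flat_map (fun c => map (fun v => c ** ginv v) B) K).
  intros f n Hp H0 Hn.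
  destruct (exists_switch (fun i => halfG (f i)) n H0 Hn) as (s & Hs & A1 & A2).
  destruct (Hp s Hs) as (w & Hw & Hlen & Ew).
  destruct (word_crossing X K HK w (f s)) as (c & u & Hc & Hu & Hlu & Eg); auto.
  { rewrite <- Ew, mulKVg. unfold separated, halfG in *. tauto. }
  exists s. split; [lia|]. apply in_flat_map. exists c. split; auto.
  rewrite Eg. apply (in_map (fun v => c ** ginv v)), HB; auto. lia.
Qed.

Lemma gpow_halfG_eventually h : (forall i j, gpow h i = gpow h j -> i = j) ->
  exists N0, forall n, N0 <= n -> (halfG (gpow h n) <-> halfG (gpow h N0)).
Proof.
  intro Hinj. destruct (finite_step_crossers h) as [C HC].
  destruct (injective_seq_avoids (gpow h) Hinj C) as [N0 HN0].
  exists N0. intros n Hn. induction Hn as [|n Hn IH]; [tauto|].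
  rewrite <- IH. apply NNPP. intro Hsep. apply (HN0 n Hn), HC.
  rewrite <- gpowSr. unfold separated, halfG in *. tauto.
Qed.

(** * Negative swamps *)

Section Swamp.
Variables k m : G.
Hypothesis Hk : forall y, Ta y -> Tb (act k y).
Hypothesis Hm : forall y, Tb y -> Ta (act m y).
Variable P : G -> Prop.
Hypothesis HP : positive_cone P.

Lemma halfG_k g : halfG g -> ~ halfG (k ** g).
Proof. unfold halfG. rewrite actM, <- Tb_iff. apply Hk. Qed.

Lemma halfG_m g : ~ halfG g -> halfG (m ** g).
Proof. unfold halfG. rewrite actM, <- Tb_iff. apply Hm. Qed.

Lemma Ta_m_a : Ta (act m a).
Proof.
  apply NNPP. intro H.
  pose proof (Hm b (half_refl a b)) as Hmb.
  rewrite (edge_flip_trivial m H Hmb), act1 in Hmb.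
  exact (proj1 (Tb_iff b) (half_refl a b) Hmb).
Qed.

Lemma cone_nonempty : exists g, P g.
Proof.
  pose proof HP as (_ & Htri & _).
  destruct (Htri k) as [Hq|[Hq|Hk1]]; eauto.
  pose proof (Hk a (half_refl b a)) as Hka. rewrite Hk1, act1, Tb_iff in Hka.
  destruct (Hka (half_refl b a)).
Qed.

Definition split_cosets (H : G -> Prop) : Prop :=
  exists c1 c2 (Lc : list G), forall N, (forall l, In l Lc -> glt P l N) ->
    forall x, H x ->
      (glt P (c1 ** x) N \/ halfG (c1 ** x)) /\ (glt P (c2 ** x) N \/ ~ halfG (c2 ** x)).

Lemma elliptic_split_cosets H : acts_elliptically act H -> split_cosets H.
Proof.
  intros [v Hv].
  assert (x_Tb : forall y, ~ Ta y -> ~ Ta (act (k ** m) y)).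
  { intros y Hy. rewrite actM, <- Tb_iff. apply Hk, Hm. now apply Tb_iff. }
  assert (x_a : ~ Ta (act (k ** m) a)) by (rewrite actM, <- Tb_iff; apply Hk, Ta_m_a).
  destruct (Y_stab_out (k ** m) x_Tb x_a v) as [M HM].
  exists (m ** gpow (k ** m) M), (gpow (k ** m) M), nil. intros N _ x Hx.
  assert (Hout : ~ halfG (gpow (k ** m) M ** x)) by (unfold halfG; rewrite actM; now apply HM, Hv).
  split; right; [rewrite <- mulgA; now apply halfG_m | exact Hout].
Qed.

Lemma split_cosets_of_gpow h H : P h ->
  (forall x, H x -> exists n, x = gpow h n \/ x = gpow (ginv h) n) -> split_cosets H.
Proof.
  intros Hh HH.
  destruct (gpow_halfG_eventually h (gpow_inj P HP h Hh)) as [N0 HN0].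
  destruct (classic (halfG (gpow h N0))) as [HA|HA].
  - exists one, k, [one ** gpow h N0; k ** gpow h N0]. intros N HN x Hx. split.
    + apply (cyclic_coset_tail P HP h one halfG N0); auto.
      * intros n Hn. rewrite mul1g. now apply HN0.
      * apply HN. now left.
    + apply (cyclic_coset_tail P HP h k (fun g => ~ halfG g) N0); auto.
      * intros n Hn. apply halfG_k. now apply HN0.
      * apply HN. right. now left.
  - exists m, one, [m ** gpow h N0; one ** gpow h N0]. intros N HN x Hx. split.
    + apply (cyclic_coset_tail P HP h m halfG N0); auto.
      * intros n Hn. apply halfG_m. now rewrite HN0.
      * apply HN. now left.
    + apply (cyclic_coset_tail P HP h one (fun g => ~ halfG g) N0); auto.
      * intros n Hn. rewrite mul1g. now rewrite HN0.
      * apply HN. right. now left.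
Qed.

Lemma cyclic_split_cosets H : cyclic_subgroup H -> split_cosets H.
Proof.
  intros [h Hh]. pose proof HP as (_ & Htri & _).
  destruct (Htri h) as [Ph | [Ph | ->]].
  - apply (split_cosets_of_gpow h); auto. intros x Hx. now apply Hh.
  - apply (split_cosets_of_gpow (ginv h)); auto. intros x Hx.
    rewrite invgK. apply Hh in Hx as (n & E). exists n. tauto.
  - exists one, one, [one]. intros N HN x Hx.
    assert (x = one) as ->.
    { apply Hh in Hx as (n & [-> | ->]); [|rewrite invg1]; apply gpow1n. }
    assert (glt P one N) by (apply HN; now left).
    rewrite mulg1. auto.
Qed.

(* Translating by an element [N] above all the finitely many elements where an
   [r]-path can cross the wall turns the negative cone into a separating set. *)
Lemma exists_negative_wall X r (Lc : list G) : exists N,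
  (forall l, In l Lc -> glt P l N) /\
  forall f n, r_path X r f n -> halfG (N ** f 0) -> ~ halfG (N ** f n) ->
    exists i, i <= n /\ P (ginv (f i)).
Proof.
  destruct (finite_wall_crossing X r) as [C HC].
  destruct (exists_strict_upper_bound P HP (C ++ Lc) cone_nonempty) as [N HN].
  exists N. split.
  - intros l Hl. apply HN, in_app_iff. now right.
  - intros f n Hp H0 Hn.
    destruct (HC (fun i => N ** f i) n (r_path_mull X r f n N Hp) H0 Hn) as (i & Hi & Hin).
    exists i. split; auto. apply (P_inv_of_glt P N), HN, in_app_iff. now left.
Qed.

Lemma negative_swamp_of_split X r H : split_cosets H -> exists S, negative_swamp X P r H S.
Proof.
  intros (c1 & c2 & Lc & HLc).
  destruct (exists_negative_wall X r Lc) as (N & HLcN & Hwall).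
  assert (Hneg : forall z, glt P z N -> P (ginv (ginv N ** z))).
  { intros z Hz. apply (P_inv_of_glt P N). now rewrite mulKVg. }
  exists (fun s => P (ginv s)). split; [auto | split].
  - destruct cone_nonempty as [g0 Hg0].
    destruct (unbounded_of_cover P HP halfG m g0) with (N := N) as (u & Hu & HNu); auto.
    { intro g. destruct (classic (halfG g)); auto using halfG_m. }
    destruct (unbounded_of_cover P HP (fun g => ~ halfG g) k g0) with (N := N) as (v & Hv & HNv);
      auto.
    { intro g. destruct (classic (halfG g)); auto using halfG_k. }
    exists (ginv N ** u), (ginv N ** v). split; [exact HNu | split; [exact HNv|]].
    intros f n Hp E0 En. apply Hwall; auto; [rewrite E0 | rewrite En]; now rewrite mulKVg.
  - exists (ginv N ** c1), (ginv N ** c2). intros f n Hp [x [Hx E0]] [x' [Hx' En]].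
    destruct (HLc N HLcN x Hx) as [[L1|A1] _].
    { exists 0. split; [lia|]. rewrite E0, <- mulgA. now apply Hneg. }
    destruct (HLc N HLcN x' Hx') as [_ [L2|A2]].
    { exists n. split; [lia|]. rewrite En, <- mulgA. now apply Hneg. }
    apply Hwall; auto; [rewrite E0 | rewrite En]; now rewrite <- mulgA, mulKVg.
Qed.

End Swamp.

Lemma Hucha_of_edge_flips k m :
  (forall y, Ta y -> Tb (act k y)) -> (forall y, Tb y -> Ta (act m y)) ->
  Hucha (fun H : G -> Prop => subgroup H /\ (cyclic_subgroup H \/ acts_elliptically act H)).
Proof.
  intros Hk Hm X _ P HP H [_ [Hcyc | Hell]] r _;
    eapply negative_swamp_of_split; eauto.
  - eapply cyclic_split_cosets; eauto.
  - eapply elliptic_split_cosets; eauto.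
Qed.

End FreeEdge.

End TreeActions.

Theorem proposition5p9 (G : Group) (V : Type) (adj : V -> V -> Prop)
  (act : G -> V -> V)
  (HT : simplicial_tree adj)
  (Hact : tree_action adj act)
  (Hfg : finitely_generated G)
  (Hlo : left_orderable G)
  (Hcof : cofinite_action adj act)
  (Hmin : minimal_action adj act)
  (Hgen : general_type adj act)
  (Hedge : exists u v, adj u v /\ forall g, edge_stab act u v g -> g = gone G)
  (Hvst : forall v, fg_subgroup (vertex_stab act v)) :
  Hucha (fun H : G -> Prop =>
           subgroup H /\ (cyclic_subgroup H \/ acts_elliptically act H)).
Proof.
  destruct HT as (Hsym & Hirr & Hconn & Hnocyc).
  destruct Hact as (Hact1 & HactM & HactAdj & _).
  destruct Hgen as (_ & Hnfe & _).
  destruct Hedge as (a & b & Hab & Hstab).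
  assert (Hstab' : forall g, edge_stab act b a g -> g = gone G)
    by (intros g Hg; apply Hstab; unfold edge_stab in *; tauto).
  destruct (exists_Ta_into_Tb adj Hsym Hirr Hconn Hnocyc act Hact1 HactM HactAdj
              a b Hab Hstab Hmin Hnfe) as [k Hk].
  destruct (exists_Ta_into_Tb adj Hsym Hirr Hconn Hnocyc act Hact1 HactM HactAdj
              b a (Hsym _ _ Hab) Hstab' Hmin Hnfe) as [m Hm].
  exact (Hucha_of_edge_flips adj Hsym Hirr Hconn Hnocyc act Hact1 HactM HactAdj
           a b Hab Hstab k m Hk Hm).
Qed.
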